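(* Let $\mathbf{Q}(t)=(Q_1(t),\ldots,Q_K(t))$, $t\in\{0,1,2,\ldots\}$, be a stochastic vector process with real-valued components, let $L(\mathbf{Q})=\frac{1}{2}\sum_{k=1}^Kw_kQ_k^2$ with constants $w_k>0$, $\delta(t)=L(\mathbf{Q}(t+1))-L(\mathbf{Q}(t))$ and $d_k(t)=Q_k(t+1)-Q_k(t)$. Suppose there is a finite constant $D>0$ such that $\mathbb{E}[d_k(t)^4\mid\mathbf{Q}(t)]\leq D$ for all $k\in\{1,\ldots,K\}$, all $t$ and all possible $\mathbf{Q}(t)$, and that $\sum_{t=1}^\infty\mathbb{E}[Q_k(t)^2]/t^2<\infty$ for all $k$. Then $\sum_{t=1}^\infty\mathbb{E}[\delta(t)^2]/t^2<\infty$.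
   Context: ''For all possible $\mathbf{Q}(t)$'' means for every realization (almost surely). *)

From HB Require Import structures.
From mathcomp Require Import all_boot all_order all_algebra.
From mathcomp Require Import all_classical all_reals all_analysis.
Set Implicit Arguments. Unset Strict Implicit. Unset Printing Implicit Defensive.
Import Order.TTheory GRing.Theory Num.Theory.
Local Open Scope classical_set_scope.
Local Open Scope ring_scope.

Definition gen_sets (d : measure_display) (T : measurableType d) (R : realType)
  (K : nat) (X : 'I_K -> T -> R) : set (set T) :=
  [set A | exists k B, measurable B /\ A = X k @^-1` B].

Definition sigmaQ (d : measure_display) (T : measurableType d) (R : realType)
  (K : nat) (X : 'I_K -> T -> R) : set (set T) :=
  <<s gen_sets X >>.

(* "E[Z | sigma(X)] <= D almost surely": there is a version Y of the
   conditional expectation of Z given sigma(X) (Y is sigma(X)-measurable,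
   integrable, and int_A Z = int_A Y for all A in sigma(X)) with Y <= D a.s.
   (Versions are a.s. unique, so this does not depend on the version.) *)
Definition condexp_le (d : measure_display) (T : measurableType d)
  (R : realType) (P : probability T R) (K : nat) (X : 'I_K -> T -> R)
  (Z : T -> R) (D : R) : Prop :=
  exists Y : T -> R,
    (forall B : set R, measurable B -> sigmaQ X (Y @^-1` B)) /\
    P.-integrable setT (fun x => (Y x)%:E) /\
    (forall A, sigmaQ X A ->
       (\int[P]_(x in A) (Z x)%:E = \int[P]_(x in A) (Y x)%:E)%E) /\
    {ae P, forall x, Y x <= D}.

(* Write d_k = Q_k(t+1) - Q_k(t).  Then delta(t) = sum_k w_k (Q_k d_k + d_k^2 / 2),
   so by Cauchy-Schwarz and (q d + d^2/2)^2 <= q^2 + q^2 d^4 + d^4,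
   delta^2 <= K sum_k w_k^2 (Q_k^2 + Q_k^2 d_k^4 + d_k^4).  Conditioning on Q(t)
   bounds E[d_k^4] by D and E[Q_k^2 d_k^4] by D (E[Q_k^2] + 1); the latter by
   cutting Q_k^2 into the level sets {n <= Q_k^2}, which belong to sigma(Q(t)).
   Hence E[delta(t)^2] <= a E[Q_k(t)^2] + b summed over k, and the series
   converges because sum_t E[Q_k(t)^2] / t^2 and sum_t 1 / t^2 do. *)

From HB Require Import structures.
From mathcomp Require Import all_boot all_order all_algebra.
From mathcomp Require Import all_classical all_reals all_analysis.
From mathcomp Require Import measurable_realfun ring lra.
Set Implicit Arguments. Unset Strict Implicit. Unset Printing Implicit Defensive.
Import Order.TTheory GRing.Theory Num.Theory.
Local Open Scope classical_set_scope.
Local Open Scope ring_scope.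

Lemma sum_inv_sqr_le (R : realFieldType) (n : nat) :
  \sum_(1 <= t < n.+2) ((t%:R : R) ^+ 2)^-1 <= 2 - (n.+1%:R)^-1.
Proof.
elim: n => [|n IHn]; first by rewrite big_nat1 expr1n invr1; lra.
rewrite big_nat_recr //= -[n.+2%:R]natr1.
have a_gt0 : (0 : R) < n.+1%:R by rewrite ltr0n.
move: IHn; set a : R := n.+1%:R => IHn.
have a1_gt0 : 0 < a + 1 by lra.
have telescope : ((a + 1) ^+ 2)^-1 <= a^-1 - (a + 1)^-1.
  have -> : a^-1 - (a + 1)^-1 = (a * (a + 1))^-1 by field; rewrite !gt_eqF.
  rewrite lef_pV2 ?posrE ?exprn_gt0 ?mulr_gt0 // expr2.
  by rewrite ler_wpM2r ?ltW //; lra.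
by apply: le_trans (lerD IHn telescope) _; rewrite addrA subrK.
Qed.

Lemma nneseries_inv_sqr_le (R : realType) :
  (\sum_(1 <= t <oo) (((t%:R : R) ^+ 2)^-1)%:E <= 2%:E)%E.
Proof.
apply: lime_le.
  by apply: is_cvg_nneseries => n _; rewrite lee_fin invr_ge0 exprn_ge0.
near=> n; have [m ->] : exists m, n = m.+2.
  exists n.-2; rewrite -subn2 -[LHS](subnK (_ : 2 <= n)%N) ?addn2 //.
  by near: n; exact: nbhs_infty_ge.
rewrite sumEFin lee_fin (le_trans (sum_inv_sqr_le _ m)) // lerBlDr lerDl invr_ge0 //.
Unshelve. all: by end_near.
Qed.

Lemma sqr_sum_le (R : realFieldType) (K : nat) (a : 'I_K -> R) :
  (\sum_(k < K) a k) ^+ 2 <= K%:R * \sum_(k < K) a k ^+ 2.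
Proof.
rewrite expr2 mulr_suml.
under eq_bigr do rewrite mulr_sumr.
apply: (@le_trans _ _ (\sum_(i < K) \sum_(j < K) 2^-1 * (a i ^+ 2 + a j ^+ 2))).
  apply: ler_sum => i _; apply: ler_sum => j _.
  by have := sqr_ge0 (a i - a j); lra.
under eq_bigr do rewrite -mulr_sumr big_split /= sumr_const card_ord.
rewrite -mulr_sumr big_split /= sumr_const card_ord sumrMnl -mulr_natl.
by lra.
Qed.

Lemma sqr_increment_le (R : realFieldType) (q d : R) :
  (q * d + 2^-1 * d ^+ 2) ^+ 2 <= q ^+ 2 + q ^+ 2 * d ^+ 4 + d ^+ 4.
Proof.
have := sqr_ge0 (q * d - 2^-1 * d ^+ 2); have := sqr_ge0 (q * (1 - d ^+ 2)).
have : 0 <= d ^+ 4 by exact: exprn_even_ge0.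
by lra.
Qed.

Definition lyapunov (R : fieldType) (K : nat) (w q : 'I_K -> R) : R :=
  2^-1 * \sum_(k < K) w k * q k ^+ 2.

Lemma sqr_lyapunovB_le (R : realFieldType) (K : nat) (w q q' : 'I_K -> R) :
  (lyapunov w q' - lyapunov w q) ^+ 2 <=
  \sum_(k < K) (K%:R * w k ^+ 2) *
     (q k ^+ 2 + q k ^+ 2 * (q' k - q k) ^+ 4 + (q' k - q k) ^+ 4).
Proof.
have -> : lyapunov w q' - lyapunov w q =
    \sum_(k < K) w k * (q k * (q' k - q k) + 2^-1 * (q' k - q k) ^+ 2).
  by rewrite -mulrBr -sumrB mulr_sumr; apply: eq_bigr => k _; field.
apply: le_trans; first exact: sqr_sum_le.
rewrite mulr_sumr; apply: ler_sum => k _.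
rewrite exprMn mulrA ler_wpM2l ?sqr_increment_le //.
by rewrite mulr_ge0 ?sqr_ge0.
Qed.

Lemma le_nneseries_level (R : realType) (v z : R) : 0 <= v -> 0 <= z ->
  ((v * z)%:E <= \sum_(n <oo) (if n%:R <= v then z else 0)%:E)%E.
Proof.
move=> v_ge0 z_ge0.
apply: le_trans (nneseries_lim_ge (Num.truncn v).+1 _); last first.
  by move=> n _ _; case: ifP; rewrite lee_fin.
rewrite (eq_big_nat _ _ (F2 := fun=> z%:E)); last first.
  move=> i /andP[_ hi]; rewrite ifT //.
  by rewrite (le_trans _ (_ : (Num.truncn v)%:R <= v)) ?truncn_le // ler_nat -ltnS.
rewrite sumEFin sumr_const_nat subn0 lee_fin -mulr_natl ler_wpM2r //.
exact/ltW/truncnS_gt.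
Qed.

Lemma nneseries_level_le (R : realType) (v : R) : 0 <= v ->
  (\sum_(n <oo) (if n%:R <= v then 1 else 0)%:E <= (v + 1)%:E)%E.
Proof.
move=> v_ge0; apply: lime_le.
  by apply: is_cvg_nneseries => n _ _; case: ifP; rewrite lee_fin.
apply: nearW => N; rewrite sumEFin lee_fin.
suff : \sum_(0 <= i < N) (if i%:R <= v then 1 else 0) <= Num.min (v + 1) N%:R :> R.
  by rewrite le_min => /andP[].
elim: N => [|N IHN]; first by rewrite big_geq // le_min; apply/andP; split; lra.
rewrite big_nat_recr //= -natr1; move: IHN; rewrite !le_min => /andP[IH1 IH2].
by case: ifP => hN; apply/andP; split; lra.
Qed.

Section level_sets.
Context d (T : measurableType d) (R : realType) (mu : {measure set T -> \bar R}).
Variable v : T -> R.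
Hypothesis mv : measurable_fun setT v.

Lemma measurable_level (n : nat) : measurable [set x | n%:R <= v x].
Proof.
have := mv measurableT (measurable_itv `[n%:R, +oo[); rewrite setTI.
by congr measurable; apply/seteqP; split => x /=; rewrite in_itv /= andbT.
Qed.

Lemma measurable_fun_level (n : nat) (Z : T -> R) : measurable_fun setT Z ->
  measurable_fun setT (fun x => (if n%:R <= v x then Z x else 0)%:E).
Proof.
move=> mZ; apply/measurable_EFinP; apply: measurable_fun_ifT => //.
exact: measurable_fun_ler.
Qed.

Lemma integral_levelE (n : nat) (Z : T -> R) :
  (\int[mu]_(x in [set x | (n%:R <= v x)%R]) (Z x)%:E =
   \int[mu]_x (if (n%:R <= v x)%R then Z x else 0)%:E)%E.
Proof.
rewrite integral_mkcond; apply: eq_integral => x _; rewrite patchE.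
have [h|h] := boolP (n%:R <= v x); first by rewrite mem_set.
by rewrite memNset //; apply/negP.
Qed.

Hypothesis v_ge0 : forall x, 0 <= v x.

Lemma integral_mul_le_nneseries_level (Z : T -> R) :
  measurable_fun setT Z -> (forall x, 0 <= Z x) ->
  (\int[mu]_x (v x * Z x)%:E <=
   \sum_(n <oo) \int[mu]_(x in [set x | (n%:R <= v x)%R]) (Z x)%:E)%E.
Proof.
move=> mZ Z_ge0; pose f n x := (if (n%:R <= v x)%R then Z x else 0)%:E.
have f_ge0 n x : (0 <= f n x)%E by rewrite /f; case: ifP; rewrite lee_fin.
have mf n : measurable_fun setT (f n) by exact: measurable_fun_level.
have levelE n : (\int[mu]_(x in [set x | (n%:R <= v x)%R]) (Z x)%:E =
    \int[mu]_x f n x)%E by exact: integral_levelE.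
under eq_eseriesr do rewrite levelE.
rewrite -integral_nneseries //; apply: ge0_le_integral => //.
- by move=> x _; rewrite lee_fin mulr_ge0.
- by apply/measurable_EFinP; exact: measurable_funM.
- apply: (@ge0_emeasurable_sum _ _ _ setT f xpredT) => *; first exact: f_ge0.
  exact: mf.
- by move=> x _; exact: le_nneseries_level.
Qed.

Lemma nneseries_measure_level_le :
  (\sum_(n <oo) mu [set x | (n%:R <= v x)%R] <= \int[mu]_x (v x)%:E + mu setT)%E.
Proof.
pose f n x := (if (n%:R <= v x)%R then 1 else 0 : R)%:E.
have f_ge0 n x : (0 <= f n x)%E by rewrite /f; case: ifP; rewrite lee_fin.
have mf n : measurable_fun setT (f n).
  by apply: measurable_fun_level; exact: measurable_cst.
have mvE : measurable_fun setT (fun x => (v x)%:E) by apply/measurable_EFinP.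
have measure_levelE n : (mu [set x | (n%:R <= v x)%R] = \int[mu]_x f n x)%E.
  by rewrite -integral_levelE integral_cst ?mul1e //; exact: measurable_level.
under eq_eseriesr do rewrite measure_levelE.
rewrite -integral_nneseries // -[mu setT]mul1e -integral_cst //.
rewrite -ge0_integralD // => [|x _]; last by rewrite lee_fin.
apply: ge0_le_integral => //.
- by move=> x _; exact: nneseries_ge0.
- apply: (@ge0_emeasurable_sum _ _ _ setT f xpredT) => *; first exact: f_ge0.
  exact: mf.
- exact: emeasurable_funD.
- by move=> x _; rewrite -EFinD; exact: nneseries_level_le.
Qed.

End level_sets.

Lemma ge0_affine_combE (R : realType) (D : R) (x : \bar R) : 0 <= D -> (0 <= x)%E ->
  (x + D%:E * (x + 1) + D%:E = (1 + D)%:E * x + (2 * D)%:E)%E.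
Proof.
move=> D_ge0 x_ge0.
rewrite ge0_muleDr ?lee_fin // mule1 EFinD ge0_muleDl ?lee_fin // mul1e.
by rewrite mulr_natl mulr2n EFinD !addeA.
Qed.

Section conditional_bound.
Context d (T : measurableType d) (R : realType) (P : probability T R) (K : nat).
Variable X : 'I_K -> T -> R.

Lemma sigmaQ_setT : sigmaQ X setT.
Proof.
have [sigma0 sigmaCD _] := smallest_sigma_algebra setT (gen_sets X).
by rewrite -(setD0 setT); exact: sigmaCD sigma0.
Qed.

Lemma sigmaQ_preimage (k : 'I_K) (B : set R) : measurable B ->
  sigmaQ X (X k @^-1` B).
Proof. by move=> mB; apply: sub_gen_smallest; exists k, B. Qed.

Lemma condexp_le_integral (Z : T -> R) (D : R) (A : set T) : 0 <= D ->
  condexp_le P X Z D -> sigmaQ X A -> measurable A ->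
  (\int[P]_(x in A) (Z x)%:E <= D%:E * P A)%E.
Proof.
move=> D_ge0 [Y [_ [iY [intZY aeY]]]] sA mA.
(* int_A Z = int_A Y <= int_A Y^+ <= D P(A) *)
rewrite intZY // integralE.
have mY : measurable_fun setT (fun x => (Y x)%:E) by case/integrableP: iY.
apply: (@le_trans _ _ (\int[P]_(x in A) ((fun x => (Y x)%:E) ^\+ x))%E).
  rewrite leeBlDr; last by apply: integrable_neg_fin_num => //; exact: integrableS iY.
  by rewrite leeDl // integral_ge0.
rewrite -integral_cst //; apply: ae_ge0_le_integral => //.
- by apply: measurable_funepos; exact: measurable_funS mY.
- apply: filterS aeY => x Yx _.
  by rewrite funeposE /= ge_max !lee_fin Yx.
Qed.

Hypothesis mX : forall k, measurable_fun setT (X k).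

Lemma integral_sqr_mul_condexp_le (k : 'I_K) (Z : T -> R) (D : R) : 0 <= D ->
  measurable_fun setT Z -> (forall x, 0 <= Z x) -> condexp_le P X Z D ->
  (\int[P]_x (X k x ^+ 2 * Z x)%:E <= D%:E * (\int[P]_x (X k x ^+ 2)%:E + 1))%E.
Proof.
move=> D_ge0 mZ Z_ge0 condZ.
have mX2 : measurable_fun setT (fun x => X k x ^+ 2) by exact: measurable_funX.
have mlevel n : measurable [set r : R | n%:R <= r ^+ 2].
  by apply: measurable_level; exact: exprn_measurable.
apply: le_trans.
  exact: (integral_mul_le_nneseries_level P mX2 (fun x => sqr_ge0 _) mZ Z_ge0).
apply: (@le_trans _ _ (\sum_(n <oo) D%:E * P [set x | (n%:R <= X k x ^+ 2)%R])%E).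
  apply: lee_nneseries => [n _ _|n _].
    by apply: integral_ge0 => x _; rewrite lee_fin.
  apply: condexp_le_integral => //; first exact: (sigmaQ_preimage k (mlevel n)).
  exact: measurable_level.
rewrite nneseriesZl // -(probability_setT P).
apply: lee_wpmul2l; first by rewrite lee_fin.
exact: (nneseries_measure_level_le P mX2 (fun x => sqr_ge0 _)).
Qed.

Lemma integral_increment_le (k : 'I_K) (z : T -> R) (c D : R) :
  0 <= c -> 0 <= D ->
  measurable_fun setT z -> (forall x, 0 <= z x) -> condexp_le P X z D ->
  (\int[P]_x (c * (X k x ^+ 2 + X k x ^+ 2 * z x + z x))%:E <=
   (c * (1 + D))%:E * \int[P]_x (X k x ^+ 2)%:E + (c * (2 * D))%:E)%E.
Proof.
move=> c_ge0 D_ge0 mz z_ge0 condz.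
have mX2 : measurable_fun setT (fun x => (X k x ^+ 2)%:E).
  by apply/measurable_EFinP; exact: measurable_funX.
have mX2z : measurable_fun setT (fun x => (X k x ^+ 2 * z x)%:E).
  by apply/measurable_EFinP; apply: measurable_funM => //; exact: measurable_funX.
have mzE : measurable_fun setT (fun x => (z x)%:E) by apply/measurable_EFinP.
have X2_ge0 x : (0 <= (X k x ^+ 2)%:E)%E by rewrite lee_fin sqr_ge0.
have X2z_ge0 x : (0 <= (X k x ^+ 2 * z x)%:E)%E by rewrite lee_fin mulr_ge0 ?sqr_ge0.
have zE_ge0 x : (0 <= (z x)%:E)%E by rewrite lee_fin.
set I := (\int[P]_x (X k x ^+ 2)%:E)%E.
have I_ge0 : (0 <= I)%E by exact: integral_ge0.
have intz : (\int[P]_x (z x)%:E <= D%:E)%E.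
  have := condexp_le_integral D_ge0 condz sigmaQ_setT measurableT.
  by rewrite probability_setT mule1.
under eq_integral do rewrite EFinM !EFinD.
rewrite ge0_integralZl_EFin //; last 2 first.
- by move=> x _; rewrite !adde_ge0.
- by apply: emeasurable_funD => //; exact: emeasurable_funD.
rewrite ge0_integralD //; last 2 first.
- by move=> x _; rewrite adde_ge0.
- exact: emeasurable_funD.
rewrite ge0_integralD //.
have -> : ((c * (1 + D))%:E * I + (c * (2 * D))%:E =
           c%:E * (I + D%:E * (I + 1) + D%:E))%E.
  rewrite ge0_affine_combE // [RHS]ge0_muleDr ?muleA -?EFinM //.
    by rewrite mule_ge0 // lee_fin addr_ge0.
  by rewrite lee_fin mulr_ge0.
apply: lee_wpmul2l; first by rewrite lee_fin.
apply: leeD => //; apply: leeD => //.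
exact: integral_sqr_mul_condexp_le.
Qed.

End conditional_bound.

Lemma measurable_lyapunov d (T : measurableType d) (R : realType) (K : nat)
  (w : 'I_K -> R) (X : 'I_K -> T -> R) :
  (forall k, measurable_fun setT (X k)) ->
  measurable_fun setT (fun x => lyapunov w (X^~ x)).
Proof.
move=> mX; apply: measurable_funM => //; apply: measurable_sum => k.
by apply: measurable_funM => //; exact: measurable_funX.
Qed.

Lemma integral_sqr_lyapunovB_le d (T : measurableType d) (R : realType)
  (P : probability T R) (K : nat) (X X' : 'I_K -> T -> R) (w : 'I_K -> R) (D : R) :
  (forall k, measurable_fun setT (X k)) -> (forall k, measurable_fun setT (X' k)) ->
  0 <= D -> (forall k, condexp_le P X (fun x => (X' k x - X k x) ^+ 4) D) ->
  (\int[P]_x ((lyapunov w (X'^~ x) - lyapunov w (X^~ x)) ^+ 2)%:E <=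
   \sum_(k < K) ((K%:R * w k ^+ 2 * (1 + D))%:E * \int[P]_x (X k x ^+ 2)%:E
                 + (K%:R * w k ^+ 2 * (2 * D))%:E))%E.
Proof.
move=> mX mX' D_ge0 condz.
pose z k x := (X' k x - X k x) ^+ 4.
have z_ge0 k x : 0 <= z k x by exact: exprn_even_ge0.
have mz k : measurable_fun setT (z k) by apply: measurable_funX; exact: measurable_funB.
have c_ge0 k : 0 <= K%:R * w k ^+ 2 by rewrite mulr_ge0 ?sqr_ge0.
pose F k x := (K%:R * w k ^+ 2 * (X k x ^+ 2 + X k x ^+ 2 * z k x + z k x))%:E.
have F_ge0 k x : (0 <= F k x)%E.
  by rewrite /F lee_fin mulr_ge0 // !addr_ge0 ?sqr_ge0 ?z_ge0 // mulr_ge0 ?sqr_ge0.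
have mF k : measurable_fun setT (F k).
  apply/measurable_EFinP; apply: measurable_funM => //.
  by apply: measurable_funD => //; apply: measurable_funD;
    [exact: measurable_funX | apply: measurable_funM => //; exact: measurable_funX].
apply: (@le_trans _ _ (\int[P]_x \sum_(k < K) F k x)%E).
  apply: ge0_le_integral => //.
  - by move=> x _; rewrite lee_fin sqr_ge0.
  - apply/measurable_EFinP; apply: measurable_funX.
    by apply: measurable_funB; exact: measurable_lyapunov.
  - exact: emeasurable_sum.
  - by move=> x _; rewrite /F sumEFin lee_fin; exact: sqr_lyapunovB_le.
rewrite ge0_integral_sum //; apply: lee_sum => k _.
exact: (integral_increment_le mX k (c_ge0 k) D_ge0 (mz k) (z_ge0 k) (condz k)).
Qed.

Lemma nneseries_affine_lt_pinfty (R : realType) (a : nat -> \bar R) (u : nat -> R)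
  (alpha beta : R) : 0 <= alpha -> 0 <= beta ->
  (forall t, 0 <= a t)%E -> (forall t, 0 <= u t) ->
  (\sum_(1 <= t <oo) a t * (u t)%:E < +oo)%E ->
  (\sum_(1 <= t <oo) (u t)%:E < +oo)%E ->
  (\sum_(1 <= t <oo) (alpha%:E * a t + beta%:E) * (u t)%:E < +oo)%E.
Proof.
move=> alpha_ge0 beta_ge0 a_ge0 u_ge0 sum_au sum_u.
have au_ge0 t : (0 <= a t * (u t)%:E)%E by rewrite mule_ge0 ?lee_fin.
under eq_eseriesr do rewrite ge0_muleDl ?mule_ge0 ?lee_fin // -muleA.
rewrite nneseriesD => [|t _ _|t _ _]; rewrite ?mule_ge0 ?lee_fin //.
rewrite !nneseriesZl => [|t _|t _]; rewrite ?lee_fin //.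
by apply: lte_add_pinfty; apply: lte_mul_pinfty.
Qed.

Theorem lemma2 (d : measure_display) (T : measurableType d) (R : realType)
  (P : probability T R) (K : nat) (Q : nat -> 'I_K -> T -> R)
  (w : 'I_K -> R) (D : R) :
  (forall t k, measurable_fun setT (Q t k)) ->
  (forall k, 0 < w k) ->
  0 < D ->
  (forall k t, condexp_le P (Q t) (fun x => (Q t.+1 k x - Q t k x) ^+ 4) D) ->
  (forall k, (\sum_(1 <= t <oo)
      ((\int[P]_x ((Q t k x) ^+ 2)%:E) * ((t%:R ^+ 2)^-1)%:E) < +oo)%E) ->
  let L := fun (q : 'I_K -> R) => 2^-1 * \sum_(k < K) w k * (q k) ^+ 2 in
  let delta := fun t x => L (fun k => Q t.+1 k x) - L (fun k => Q t k x) in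
  (\sum_(1 <= t <oo)
      ((\int[P]_x ((delta t x) ^+ 2)%:E) * ((t%:R ^+ 2)^-1)%:E) < +oo)%E.
Proof.
move=> mQ _ D_gt0 condQ sumQ; cbv zeta.
have D_ge0 := ltW D_gt0.
pose c k := K%:R * w k ^+ 2.
have c_ge0 k : 0 <= c k by rewrite mulr_ge0 ?sqr_ge0.
have cD1_ge0 k : 0 <= c k * (1 + D) by rewrite mulr_ge0 ?c_ge0 ?addr_ge0.
have cD2_ge0 k : 0 <= c k * (2 * D) by rewrite mulr_ge0 ?c_ge0 ?mulr_ge0.
pose I t k := (\int[P]_x (Q t k x ^+ 2)%:E)%E.
have I_ge0 t k : (0 <= I t k)%E by apply: integral_ge0 => x _; rewrite lee_fin sqr_ge0.
have term_ge0 t k : (0 <= (c k * (1 + D))%:E * I t k + (c k * (2 * D))%:E)%E.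
  by rewrite adde_ge0 ?mule_ge0 ?lee_fin.
apply: (@le_lt_trans _ _ (\sum_(1 <= t <oo) \sum_(k < K)
    ((c k * (1 + D))%:E * I t k + (c k * (2 * D))%:E) * (((t%:R : R) ^+ 2)^-1)%:E)%E).
  apply: lee_nneseries => [t _ _|t _].
    by rewrite mule_ge0 ?lee_fin // integral_ge0 // => x _; rewrite lee_fin sqr_ge0.
  rewrite -ge0_sume_distrl // lee_wpmul2r ?lee_fin //.
  exact: (integral_sqr_lyapunovB_le w (mQ t) (mQ t.+1) D_ge0 (condQ^~ t)).
rewrite nneseries_sum => [|k t _]; last by rewrite mule_ge0 ?lee_fin.
apply: lte_sum_pinfty => k _.
apply: nneseries_affine_lt_pinfty => //; first exact: sumQ.
exact: le_lt_trans (nneseries_inv_sqr_le R) (ltry _).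
Qed.
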